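(* Let $q$ be a prime power, $M\geq2$ an integer with $(M,q)=1$, and $n\geq1$. Let $U_{t+1,n}$ denote the $n\times n$ matrix over $\mathbb{F}_q$ with $-1$ on the diagonal, $1$ on the superdiagonal and $0$ elsewhere. If $\alpha\in\mathrm{GL}(n,q)$ satisfies $\alpha^M=U_{t+1,n}$, then the semisimple part $\alpha_s$ of $\alpha$ (in its Jordan decomposition $\alpha=\alpha_s\alpha_u$) is a scalar matrix. *)

From HB Require Import structures.
From mathcomp Require Import all_boot all_order all_algebra all_field.
Set Implicit Arguments. Unset Strict Implicit. Unset Printing Implicit Defensive.
Import GRing.Theory.
Local Open Scope ring_scope.

Definition Umx (F : fieldType) (n : nat) : 'M[F]_n :=
  \matrix_(i < n, j < n)
     (if i == j then -1 else if (j : nat) == i.+1 then 1 else 0).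

(* semisimple: minimal polynomial separable (i.e. diagonalizable over the
   algebraic closure). *)
Definition semisimple_mx (F : fieldType) (n : nat) (A : 'M[F]_n.+1) : bool :=
  separable_poly (mxminpoly A).

Definition unipotent_mx (F : fieldType) (n : nat) (A : 'M[F]_n.+1) : bool :=
  (A - 1) ^+ n.+1 == 0.

From HB Require Import structures.
From mathcomp Require Import all_boot all_order all_algebra all_field.
Set Implicit Arguments. Unset Strict Implicit. Unset Printing Implicit Defensive.
Import GRing.Theory.
Local Open Scope ring_scope.

(* The semisimple part s commutes with alpha, hence with alpha ^+ M = U, hence
   with the nilpotent shift N = U + 1.  Commuting with N forces s to be upper
   triangular with constant diagonal c, so its characteristic polynomial is
   ('X - c)^(n+1).  A separable minimal polynomial dividing that power must be
   'X - c, i.e. s = c. *)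

Lemma char_poly_trmx (R : comNzRingType) n (A : 'M[R]_n) :
  char_poly A^T = char_poly A.
Proof.
rewrite /char_poly -det_tr; congr (\det _); apply/matrixP => i j.
by rewrite !mxE eq_sym.
Qed.

Lemma separable_mxminpoly_dvd_XsubC_exp (F : fieldType) n (A : 'M[F]_n.+1)
    (c : F) k :
  separable_poly (mxminpoly A) -> mxminpoly A %| ('X - c%:P) ^+ k ->
  A = c%:M.
Proof.
move=> sepA /dvdp_exp_XsubCP[[|[|m]] _ eqA].
- move: (mxminpoly_nonconstant A).
  by rewrite -ltnS -size_mxminpoly (eqp_size eqA) expr0 size_poly1.
- have minA : mxminpoly A = 'X - c%:P.
    by apply/eqP; rewrite -eqp_monic ?mxminpoly_monic ?monicXsubC.
  apply/eqP; rewrite -subr_eq0 -(mx_root_minpoly A) minA rmorphB /=.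
  by rewrite horner_mx_X horner_mx_C.
- have sizeXc : size ('X - c%:P) != 1 by rewrite size_XsubC.
  have := separable_nosquare sepA (isT : (1 < m.+2)%N) sizeXc.
  by rewrite (eqp_dvdr _ eqA) dvdpp.
Qed.

Section ShiftCommutant.
Variables (F : fieldType) (n : nat).

Definition shift_mx : 'M[F]_n.+1 :=
  \matrix_(i, j) (if (j : nat) == i.+1 then 1 else 0).

Lemma Umx_shift : Umx F n.+1 = shift_mx - 1.
Proof.
apply/matrixP => i j; rewrite !mxE.
case: eqP => [->|_]; first by rewrite (ltn_eqF (ltnSn _)) sub0r.
by rewrite subr0.
Qed.

Lemma mulmx_shift_col0 (A : 'M[F]_n.+1) i : (A *m shift_mx) i (inord 0) = 0.
Proof. by rewrite mxE big1 // => k _; rewrite mxE inordK // mulr0. Qed.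

Lemma mulmx_shift_inord (A : 'M[F]_n.+1) a b : (b < n)%N ->
  (A *m shift_mx) (inord a) (inord b.+1) = A (inord a) (inord b).
Proof.
move=> ltbn; rewrite mxE (bigD1 (inord b)) //= big1 ?addr0.
  by rewrite mxE !inordK ?eqxx ?mulr1 // ltnS ltnW.
move=> k neqkb; rewrite mxE inordK ?ltnS //.
case: eqP => [[eqbk]|]; last by rewrite mulr0.
by case/eqP: neqkb; apply/val_inj; rewrite /= inordK ?eqbk // ltnS ltnW.
Qed.

Lemma shift_mulmx_inord (A : 'M[F]_n.+1) a b : (a < n)%N ->
  (shift_mx *m A) (inord a) (inord b) = A (inord a.+1) (inord b).
Proof.
move=> ltan; rewrite mxE (bigD1 (inord a.+1)) //= big1 ?addr0.
  by rewrite mxE !inordK ?eqxx ?mul1r // ltnS ltnW.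
move=> k neqka; rewrite mxE (inordK (leqW ltan)).
case: eqP => [eqka|]; last by rewrite mul0r.
by case/eqP: neqka; apply/val_inj; rewrite /= inordK ?eqka.
Qed.

Variable s : 'M[F]_n.+1.
Hypothesis s_shift : comm_mx s shift_mx.

(* Comparing entries of s N = N s gives s_(a+1, b+1) = s_(a, b) and
   s_(a+1, 0) = 0, which propagate along the diagonals. *)
Lemma comm_shift_lower0 b a : (a <= n)%N -> (b < a)%N ->
  s (inord a) (inord b) = 0.
Proof.
elim: b a => [|b IHb] [|a] // lean ltba.
  by rewrite -(shift_mulmx_inord _ 0 lean) -s_shift mulmx_shift_col0.
rewrite -(shift_mulmx_inord _ _ lean) -s_shift.
by rewrite (mulmx_shift_inord _ _ (ltnW (leq_trans ltba lean))) IHb // ltnW.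
Qed.

Lemma comm_shift_diag_inord a : (a <= n)%N ->
  s (inord a) (inord a) = s (inord 0) (inord 0).
Proof.
elim: a => [|a IHa] // lean.
rewrite -(shift_mulmx_inord _ _ lean) -s_shift (mulmx_shift_inord _ _ lean).
by rewrite IHa // ltnW.
Qed.

Lemma comm_shift_trig_trmx : is_trig_mx s^T.
Proof.
apply/is_trig_mxP => i j ltij; rewrite mxE.
by have := comm_shift_lower0 (ltn_ord j) ltij; rewrite !inord_val.
Qed.

Lemma comm_shift_diag i : s i i = s ord0 ord0.
Proof.
by have := comm_shift_diag_inord (ltn_ord i); rewrite !inord_val (inord_val ord0).
Qed.

Lemma comm_shift_char_poly : char_poly s = ('X - (s ord0 ord0)%:P) ^+ n.+1.
Proof.
rewrite -char_poly_trmx char_poly_trig ?comm_shift_trig_trmx //.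
under eq_bigr do rewrite mxE comm_shift_diag.
by rewrite prodr_const card_ord.
Qed.

End ShiftCommutant.

Lemma separable_comm_shift_scalar (F : fieldType) n (s : 'M[F]_n.+1) :
  comm_mx s (shift_mx F n) -> separable_poly (mxminpoly s) -> is_scalar_mx s.
Proof.
move=> s_shift seps; apply/is_scalar_mxP; exists (s ord0 ord0).
apply: (separable_mxminpoly_dvd_XsubC_exp (k := n.+1) seps).
by rewrite -comm_shift_char_poly // mxminpoly_dvd_char.
Qed.

Unset Implicit Arguments. Set Strict Implicit.

Theorem lemma7p2 (F : finFieldType) (q M n : nat)
  (hq : #|F| = q) (hM : (2 <= M)%N) (hMq : coprime M q)
  (alpha : 'M[F]_n.+1) (halpha : alpha \in unitmx)
  (hpow : alpha ^+ M = Umx F n.+1)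
  (s u : 'M[F]_n.+1)
  (hdec : alpha = s * u) (hcomm : s * u = u * s)
  (hs : semisimple_mx s) (hu : unipotent_mx u) :
  is_scalar_mx s.
Proof.
apply: separable_comm_shift_scalar hs.
have s_alpha : GRing.comm s alpha by rewrite /GRing.comm hdec -mulrA -hcomm.
have s_U : comm_mx s (Umx F n.+1) by rewrite -hpow comm_mxE; apply: commrX.
have -> : shift_mx F n = Umx F n.+1 + 1 by rewrite Umx_shift subrK.
exact: comm_mxD s_U (comm_mx1 s).
Qed.
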